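(* Let $q$ be a prime power and let $\mathcal C$ be an optimal $(5,3)_q$ subspace code, i.e. a set of subspaces of $V={\rm GF}(q)^5$ with minimum subspace distance $3$ and of maximum possible size among such sets. If $\mathcal C$ contains a point of ${\rm PG}(4,q)$ (a $1$-dimensional subspace of $V$), then $\mathcal C$ contains at most $q^3$ planes (3-dimensional subspaces of $V$). Dually, if $\mathcal C$ contains a solid (a $4$-dimensional subspace of $V$), then $\mathcal C$ contains at most $q^3$ lines ($2$-dimensional subspaces of $V$).
   Context: The subspace distance between subspaces $U,U'$ of $V$ is $d_s(U,U')=\dim(U+U')-\dim(U\cap U')$. The minimum subspace distance of a set $\mathcal C$ of subspaces is $\min\{d_s(U,U') : U,U'\in\mathcal C, U\ne U'\}$. Points, lines, planes and solids of ${\rm PG}(4,q)$ are the subspaces of $V$ of (vector) dimension $1,2,3,4$ respectively. *)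

From HB Require Import structures.
From mathcomp Require Import all_boot all_order all_algebra all_field.
From mathcomp Require Import finmap.
Set Implicit Arguments.
Unset Strict Implicit.
Unset Printing Implicit Defensive.
Import GRing.Theory.
Local Open Scope fset_scope.

Definition subspace_dist (F : fieldType) (n : nat) (U W : {vspace 'rV[F]_n}) : nat :=
  (\dim (U + W) - \dim (U :&: W))%N.

Definition min_dist_ge (F : fieldType) (n d : nat) (C : {fset {vspace 'rV[F]_n}}) : Prop :=
  forall U W, U \in C -> W \in C -> U != W -> (d <= subspace_dist U W)%N.

Definition optimal_code (F : fieldType) (n d : nat) (C : {fset {vspace 'rV[F]_n}}) : Prop :=
  min_dist_ge d C /\
  forall D : {fset {vspace 'rV[F]_n}}, min_dist_ge d D -> (#|` D| <= #|` C|)%N.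

Definition members_of_dim (F : fieldType) (n k : nat) (C : {fset {vspace 'rV[F]_n}}) :
  {fset {vspace 'rV[F]_n}} := [fset U in C | \dim U == k].

From HB Require Import structures.
From mathcomp Require Import all_boot all_order all_algebra all_field.
From mathcomp Require Import finmap zify.

(* A minimum distance of 3 forces two lines of the code to be skew, a line and
   a solid to meet in at most a point, two planes to span V and a point to lie
   off every plane. If S is a solid of the code, each line of the code thus has
   at least q^2 - q vectors off S, these sets are pairwise disjoint, and only
   q^5 - q^4 vectors lie off S: there are at most q^3 lines. The statement for
   a point and the planes is dual: the annihilator U |-> U^perp maps the planes
   of the code to pairwise skew lines, each meeting the solid P^perp in at most
   a point. *)

Set Implicit Arguments.
Unset Strict Implicit.
Unset Printing Implicit Defensive.
Import GRing.Theory.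
Local Open Scope ring_scope.

Lemma dimv_rV (F : fieldType) n : \dim {:'rV[F]_n} = n.
Proof. by rewrite dimvf dim_matrix mul1r. Qed.

Section Annihilator.
Variables (F : fieldType) (n : nat).
Implicit Types U W : {vspace 'rV[F]_n}.

Definition vbasis_mx U : 'M[F]_(\dim U, n) := \matrix_(i < \dim U) (vbasis U)`_i.

Definition ann_lfun U : 'Hom('rV[F]_n, 'cV[F]_(\dim U)) :=
  linfun (mulmx (vbasis_mx U) \o trmx).

Definition ann U : {vspace 'rV[F]_n} := lker (ann_lfun U).

Lemma memv_annP U f : reflect {in U, forall u, u *m f^T = 0} (f \in ann U).
Proof.
rewrite memv_ker lfunE /=; apply: (iffP eqP) => [Bf0 u /coord_vbasis -> | Uf0].
  rewrite mulmx_suml big1 // => i _; rewrite -scalemxAl.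
  by have := congr1 (row i) Bf0; rewrite row_mul rowK row0 => ->; rewrite scaler0.
apply/row_matrixP => i; rewrite row_mul rowK row0 Uf0 //.
by rewrite vbasis_mem // memt_nth.
Qed.

Lemma annS U W : (U <= W)%VS -> (ann W <= ann U)%VS.
Proof.
move/subvP=> sUW; apply/subvP => f /memv_annP Wf0.
by apply/memv_annP => u /sUW; apply: Wf0.
Qed.

Lemma ann_addv U W : ann (U + W) = (ann U :&: ann W)%VS.
Proof.
apply/vspaceP => f; rewrite memv_cap.
apply/idP/andP => [f_ann | [/memv_annP Uf0 /memv_annP Wf0]].
  by split; apply: (subvP (annS _)) f_ann; rewrite ?addvSl ?addvSr.
apply/memv_annP => _ /memv_addP[u Uu [w Ww ->]].
by rewrite mulmxDl Uf0 ?Wf0 ?addr0.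
Qed.

Lemma ann_fullv : ann fullv = 0%VS.
Proof.
apply/vspaceP => f; rewrite memv0; apply/idP/eqP => [/memv_annP f0 | ->].
  apply/rowP => j; have := f0 _ (memvf (delta_mx 0 j)).
  by rewrite -rowE => /(congr1 (fun A : 'M_1 => A 0 0)); rewrite !mxE.
exact: mem0v.
Qed.

Lemma dim_ann_ge U : (n <= \dim (ann U) + \dim U)%N.
Proof.
rewrite -[X in (X <= _)%N](dimv_rV F) -(limg_ker_dim (ann_lfun U)) capfv leq_add2l.
by have := dimvS (subvf (limg (ann_lfun U))); rewrite dimvf dim_matrix mulr1.
Qed.

Lemma dim_ann U : \dim (ann U) = (n - \dim U)%N.
Proof.
have disjoint_anns : (ann U :&: ann U^C = 0)%VS.
  by rewrite -ann_addv addv_complf ann_fullv.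
have := dimvS (subvf (ann U + ann U^C)); rewrite dimv_disjoint_sum // dimv_rV.
have := dim_ann_ge U; have := dim_ann_ge U^C; rewrite dimv_compl dimv_rV.
have := dimvS (subvf U); rewrite dimv_rV; lia.
Qed.

End Annihilator.

Arguments ann {F n} U.

Section VectorCount.
Variables (F : finFieldType) (n : nat).
Local Notation q := #|F|.
Implicit Types L S : {vspace 'rV[F]_n}.

Definition vecs_off L S : {set 'rV[F]_n} := [set v in L] :\: [set v in S].

Lemma card_vecs_off L S : #|vecs_off L S| = (q ^ \dim L - q ^ \dim (L :&: S))%N.
Proof.
rewrite cardsD; have -> : [set v in L] :&: [set v in S] = [set v in (L :&: S)%VS].
  by apply/setP => v; rewrite !inE memv_cap.
by rewrite !cardsE !card_vspace.
Qed.

Lemma disjoint_vecs_off L L' S :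
  (L :&: L' = 0)%VS -> [disjoint vecs_off L S & vecs_off L' S].
Proof.
move=> LL'0; rewrite -setI_eq0; apply/eqP/setP => v; rewrite !inE.
apply/negP => /and3P[/andP[vS vL] _ vL']; move: vS.
have : v \in (L :&: L')%VS by rewrite memv_cap vL vL'.
by rewrite LL'0 memv0 => /eqP->; rewrite mem0v.
Qed.

Lemma card_vecs_off_ge L S :
  (2 <= \dim L)%N -> (\dim (L :&: S) <= 1)%N -> (q ^ 2 - q <= #|vecs_off L S|)%N.
Proof.
move=> dL dLS; have q_gt0 : (0 < q)%N := ltnW (card_finNzRing_gt1 F).
rewrite card_vecs_off leq_sub //; first by rewrite leq_pexp2l.
by rewrite -[X in (_ <= X)%N]expn1 leq_pexp2l.
Qed.

Lemma partial_spread_off_bound S (M : {fset {vspace 'rV[F]_n}}) :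
  {in M &, forall L L', L != L' -> (L :&: L')%VS = 0%VS} ->
  {in M, forall L, (2 <= \dim L)%N /\ (\dim (L :&: S) <= 1)%N} ->
  (#|` M| * (q ^ 2 - q) <= q ^ n - q ^ \dim S)%N.
Proof.
move=> skewM dimM.
have card_cover :
    #|\bigcup_(L : M) vecs_off (val L) S| = (\sum_(L : M) #|vecs_off (val L) S|)%N.
  rewrite -sum1_card (partition_disjoint_bigcup _ (fun _ => 1%N)).
    by apply: eq_bigr => L _; rewrite sum1_card.
  move=> L L' LL'; apply/disjoint_vecs_off/skewM; rewrite ?fsvalP //.
have cover_off_S : \bigcup_(L : M) vecs_off (val L) S \subset ~: [set v in S].
  by apply/bigcupsP => L _; apply/subsetP => v; rewrite !inE => /andP[].
have card_off_S : #|~: [set v in S]| = (q ^ n - q ^ \dim S)%N.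
  by rewrite cardsCs setCK cardsE card_vspace card_mx mul1n.
rewrite -card_off_S (leq_trans _ (subset_leq_card cover_off_S)) // card_cover.
rewrite cardfE -sum_nat_const; apply: leq_sum => L _.
by have [] := dimM _ (fsvalP L); apply: card_vecs_off_ge.
Qed.

End VectorCount.

Lemma skew_lines_off_solid_bound (F : finFieldType) (S : {vspace 'rV[F]_5})
    (M : {fset {vspace 'rV[F]_5}}) :
  (4 <= \dim S)%N ->
  {in M &, forall L L', L != L' -> (L :&: L')%VS = 0%VS} ->
  {in M, forall L, (2 <= \dim L)%N /\ (\dim (L :&: S) <= 1)%N} ->
  (#|` M| <= #|F| ^ 3)%N.
Proof.
move=> dS skewM dimM; have q_gt1 := card_finNzRing_gt1 F.
rewrite -(@leq_pmul2r (#|F| ^ 2 - #|F|)); last first.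
  by rewrite subn_gt0 -{1}[#|F|]expn1 ltn_exp2l.
apply: leq_trans (partial_spread_off_bound skewM dimM) _.
by rewrite mulnBr -expnD -expnSr leq_sub2l // leq_pexp2l // ltnW.
Qed.

Lemma subspace_distE (F : fieldType) n (U W : {vspace 'rV[F]_n}) :
  subspace_dist U W = (\dim U + \dim W - 2 * \dim (U :&: W))%N.
Proof. by rewrite /subspace_dist; have := dimv_sum_cap U W; lia. Qed.

Lemma mem_members_of_dim (F : fieldType) n k (C : {fset {vspace 'rV[F]_n}}) U :
  (U \in members_of_dim k C) = (U \in C) && (\dim U == k).
Proof. by rewrite !inE. Qed.

Section Distance3Code.
Variables (F : fieldType) (C : {fset {vspace 'rV[F]_5}}).
Hypothesis C_dist3 : min_dist_ge 3 C.
Implicit Types U W L S p P : {vspace 'rV[F]_5}.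

Lemma code_dim_cap U W : U \in C -> W \in C -> U != W ->
  (2 * \dim (U :&: W) + 3 <= \dim U + \dim W)%N.
Proof. by move=> UC WC UW; have := C_dist3 UC WC UW; rewrite subspace_distE; lia. Qed.

Lemma code_lines_skew :
  {in members_of_dim 2 C &, forall L L', L != L' -> (L :&: L')%VS = 0%VS}.
Proof.
move=> L L'; rewrite !mem_members_of_dim => /andP[LC /eqP dL] /andP[L'C /eqP dL'] LL'.
by apply/eqP; rewrite -dimv_eq0; have := code_dim_cap LC L'C LL'; lia.
Qed.

Lemma code_line_solid_cap S : S \in C -> \dim S = 4%N ->
  {in members_of_dim 2 C, forall L, (\dim (L :&: S) <= 1)%N}.
Proof.
move=> SC dS L; rewrite mem_members_of_dim => /andP[LC /eqP dL].
have LS : L != S by apply/eqP => LS; move: dL; rewrite LS dS.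
by have := code_dim_cap LC SC LS; lia.
Qed.

Lemma code_planes_span :
  {in members_of_dim 3 C &, forall p p', p != p' -> (p + p')%VS = fullv}.
Proof.
move=> p p'; rewrite !mem_members_of_dim => /andP[pC /eqP dp] /andP[p'C /eqP dp'] pp'.
apply/eqP; rewrite eqEdim subvf dimv_rV.
by have := code_dim_cap pC p'C pp'; have := dimv_sum_cap p p'; lia.
Qed.

Lemma code_plane_point_span P : P \in C -> \dim P = 1%N ->
  {in members_of_dim 3 C, forall p, \dim (p + P) = 4%N}.
Proof.
move=> PC dP p; rewrite mem_members_of_dim => /andP[pC /eqP dp].
have pP : p != P by apply/eqP => pP; move: dp; rewrite pP dP.
by have := code_dim_cap pC PC pP; have := dimv_sum_cap p P; lia.
Qed.

End Distance3Code.

Section Distance3CodeBounds.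
Variables (F : finFieldType) (C : {fset {vspace 'rV[F]_5}}).
Hypothesis C_dist3 : min_dist_ge 3 C.
Local Open Scope fset_scope.

Lemma code_lines_bound S : S \in C -> \dim S = 4%N ->
  (#|` members_of_dim 2 C| <= #|F| ^ 3)%N.
Proof.
move=> SC dS; apply: (skew_lines_off_solid_bound (S := S)); first by rewrite dS.
  exact: code_lines_skew.
move=> L LM; split; last exact: code_line_solid_cap LM.
by move: LM; rewrite mem_members_of_dim => /andP[_ /eqP->].
Qed.

Lemma code_planes_bound P : P \in C -> \dim P = 1%N ->
  (#|` members_of_dim 3 C| <= #|F| ^ 3)%N.
Proof.
move=> PC dP; set M := members_of_dim 3 C.
have dim_annM p : p \in M -> \dim (ann p) = 2%N.
  by rewrite dim_ann mem_members_of_dim => /andP[_ /eqP->].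
have skew_annM : {in M &, forall p p', p != p' -> (ann p :&: ann p')%VS = 0%VS}.
  by move=> p p' pM p'M pp'; rewrite -ann_addv (code_planes_span C_dist3) ?ann_fullv.
have ann_inj : {in M &, injective ann}.
  move=> p p' pM p'M ann_pp'; apply/eqP/negPn/negP => pp'.
  have := skew_annM p p' pM p'M pp'; rewrite -ann_pp' capvv => /eqP.
  by rewrite -dimv_eq0 dim_annM.
have /eqP <- : #|` ann @` M| == #|` M| by apply/card_in_imfsetP.
apply: (skew_lines_off_solid_bound (S := ann P)); first by rewrite dim_ann dP.
  move=> _ _ /imfsetP[p /= pM ->] /imfsetP[p' /= p'M ->] ann_pp'.
  by apply: skew_annM => //; apply: contraNneq ann_pp' => ->.
move=> _ /imfsetP[p /= pM ->]; rewrite dim_annM //.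
by rewrite -ann_addv dim_ann (code_plane_point_span C_dist3 PC dP).
Qed.

End Distance3CodeBounds.

Local Open Scope fset_scope.

Theorem lemma1p1 (F : finFieldType) (C : {fset {vspace 'rV[F]_5}}) :
  optimal_code 3 C ->
  ((exists2 P, P \in C & \dim P = 1%N) ->
     (#|` members_of_dim 3 C| <= #|F| ^ 3)%N) /\
  ((exists2 S, S \in C & \dim S = 4%N) ->
     (#|` members_of_dim 2 C| <= #|F| ^ 3)%N).
Proof.
move=> [C_dist3 _]; split.
  by case=> P PC dP; apply: (code_planes_bound C_dist3 PC dP).
by case=> S SC dS; apply: (code_lines_bound C_dist3 SC dS).
Qed.
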